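(* If $\mathcal{I}$ is a hereditary weak P-ideal, then $\omega_1$ with the order topology is in $\mathrm{FinBW}(\mathcal{I})$. In particular, there is a non-compact space in $\mathrm{FinBW}(\mathcal{I})$.
   Context: An ideal on an infinite countable set $X$ is a family $\mathcal{I}\subseteq\mathcal{P}(X)$ closed under subsets and finite unions, containing all finite subsets, with $X\notin\mathcal{I}$. $\mathcal{I}|Y=\{A\cap Y:A\in\mathcal{I}\}$. A space $X$ is in $\mathrm{FinBW}(\mathcal{I})$ if $X$ is Hausdorff and for every sequence $(x_n)_{n\in\bigcup\mathcal{I}}$ in $X$ there is $A\notin\mathcal{I}$ with $(x_n)_{n\in A}$ convergent in $X$. $\mathrm{Fin}^2$: ideal on $\omega^2$ of all $A$ with only finitely many $n$ such that $\{m:(n,m)\in A\}$ is infinite. $\mathcal{I}\sqsubseteq\mathcal{J}$: there is a bijection $f:\bigcup\mathcal{J}\to\bigcup\mathcal{I}$ with $f^{-1}[A]\in\mathcal{J}$ for all $A\in\mathcal{I}$. $\mathcal{I}$ is a hereditary weak P-ideal if $\mathrm{Fin}^2\not\sqsubseteq\mathcal{I}|A$ for every $A\notin\mathcal{I}$. *)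

From HB Require Import structures.
From mathcomp Require Import all_boot all_order all_algebra.
From mathcomp Require Import all_classical all_reals all_analysis.
Set Implicit Arguments. Unset Strict Implicit. Unset Printing Implicit Defensive.
Import Order.TTheory.
Local Open Scope classical_set_scope.

Definition is_ideal (X : Type) (I : set (set X)) : Prop :=
  [/\ (forall A B, B `<=` A -> I A -> I B),
      (forall A B, I A -> I B -> I (A `|` B)),
      (forall A, finite_set A -> I A) &
      ~ I [set: X]].

Definition restr (X : Type) (I : set (set X)) (Y : set X) : set (set X) :=
  [set C | exists2 D, I D & C = D `&` Y].

Definition Fin2 : set (set (nat * nat)) :=
  [set B | finite_set [set n | infinite_set [set m | B (n, m)]]].

(* Fin^2 ⊑ I|A : there is a bijection f : A (= ⋃ (I|A)) -> ω×ω (= ⋃ Fin^2)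
   with f^{-1}[B] ∈ I|A for all B ∈ Fin^2. *)
Definition Fin2_below_restr (X : Type) (I : set (set X)) (A : set X) : Prop :=
  exists f : X -> nat * nat,
    [/\ {in A &, injective f},
        (forall p, exists2 n, A n & f n = p) &
        (forall B, Fin2 B -> restr I A (A `&` f @^-1` B))].

Definition hereditary_weakP (X : Type) (I : set (set X)) : Prop :=
  forall A, ~ I A -> ~ Fin2_below_restr I A.

(* (x_n)_{n ∈ A} converges to l (A infinite index set, cofinite filter on A) *)
Definition converges_on (X : Type) (T : topologicalType) (A : set X)
  (x : X -> T) (l : T) : Prop :=
  forall U, nbhs l U -> finite_set (A `&` [set n | ~ U (x n)]).

(* T ∈ FinBW(I); sequences are indexed by ⋃ I = X. *)
Definition FinBW (X : Type) (I : set (set X)) (T : topologicalType) : Prop :=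
  hausdorff_space T /\
  forall x : X -> T, exists2 A, ~ I A & exists l, converges_on A x l.

(* W is (order-isomorphic to) ω₁: a well-order that is uncountable and all of
   whose proper initial segments are countable. *)
Definition is_omega1 (d : Order.disp_t) (W : orderType d) : Prop :=
  [/\ (forall S : set W, S !=set0 -> exists2 m, S m & forall y, S y -> (m <= y)%O),
      ~ countable [set: W] &
      (forall w : W, countable [set y | (y < w)%O])].

(* Let x : X -> omega1.  Since X is countable, x is bounded, so there is a least
   l such that {n | x n <= l} is not in I.  If {n | x n = l} is not in I, x is
   constant on it.  Otherwise B = {n | x n < l} is I-positive; enumerating the
   countably many a < l as e 0, e 1, ..., B splits into the pieces
   {n in B | k is least with x n <= e k}, each in I, and every I-positive A
   contained in B that meets each piece in a finite set converges to l.  Such an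
   A exists because I is a hereditary weak P-ideal: otherwise the union G of the
   infinite pieces, laid out column by column on omega x omega, would witness
   Fin^2 below I|G.  Finally omega1 is not compact, because its final segments
   generate a proper filter without cluster point. *)

From HB Require Import structures.
From mathcomp Require Import all_boot all_order all_algebra.
From mathcomp Require Import all_classical all_reals all_analysis.
From mathcomp Require Import wochoice.
Local Open Scope classical_set_scope.

Set Implicit Arguments. Unset Strict Implicit. Unset Printing Implicit Defensive.
Import Order.TTheory.

Section ideal.
Variables (X : Type) (I : set (set X)).
Hypothesis idealI : is_ideal I.

Lemma ideal_sub A B : B `<=` A -> I A -> I B.
Proof. by case: idealI => + _ _ _; apply. Qed.

Lemma ideal_setU A B : I A -> I B -> I (A `|` B).
Proof. by case: idealI => _ + _ _; apply. Qed.

Lemma ideal_finite A : finite_set A -> I A.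
Proof. by case: idealI => _ _ + _; apply. Qed.

Lemma ideal_subU A B C : C `<=` A `|` B -> I A -> I B -> I C.
Proof. by move=> CAB IA IB; apply: ideal_sub CAB (ideal_setU IA IB). Qed.

Lemma ideal_bigcup_lt (P : nat -> set X) N :
  (forall k, I (P k)) -> I (\bigcup_(k < N) P k).
Proof.
move=> IP; rewrite bigcup_mkord; elim/big_ind: _ => [||k _]; last exact: IP.
- exact/ideal_finite/finite_set0.
- exact: ideal_setU.
Qed.

End ideal.

Lemma finite_nat_bounded (A : set nat) : finite_set A -> exists N, A `<=` `I_N.
Proof.
move=> /finite_fsetP[S ->]; exists (\big[maxn/0%N]_(i <- finmap.enum_fset S) i).+1.
by move=> k /= kS; rewrite ltnS; exact: (@leq_bigmax_seq _ _ xpredT id k).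
Qed.

Lemma finite_preimage_in T U (A : set T) (B : set U) (f : T -> U) :
  {in A &, injective f} -> finite_set B -> finite_set (A `&` f @^-1` B).
Proof.
move=> finj finB.
have : (f @` (A `&` f @^-1` B) #= A `&` f @^-1` B)%card.
  by apply: inj_card_eq => x y; rewrite !inE => -[xA _] [yA _]; apply: finj; rewrite inE.
move=> /eq_finite_set <-; apply: sub_finite_set finB.
by move=> _ [x [_ ?] <-].
Qed.

Lemma countable_setU T (A B : set T) :
  countable A -> countable B -> countable (A `|` B).
Proof.
move=> cA cB; have -> : A `|` B = \bigcup_(b in [set: bool]) (if b then A else B).
  by apply/seteqP; split=> [z [Az|Bz]|z [[] _]]; [exists true|exists false|left|right].
by apply: bigcup_countable => // -[].
Qed.

Lemma countable_enum T (S : set T) :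
  countable S -> S !=set0 -> exists e : nat -> T, range e = S.
Proof.
move=> /countable_injP[c cinj] [s0 Ss0].
have [e eP] : {e : nat -> T & forall k,
    S (e k) /\ ((exists2 y, S y & c y = k) -> c (e k) = k)}.
  apply: (choice (P := fun k ek =>
    S ek /\ ((exists2 y, S y & c y = k) -> c ek = k))) => k.
  have [[y Sy cy]|none] := pselect (exists2 y, S y & c y = k); first by exists y.
  by exists s0.
exists e; apply/seteqP; split=> [_ [k _ <-]|y Sy]; first exact: (eP k).1.
exists (c y) => //; apply: cinj; rewrite ?inE //; first exact: (eP _).1.
by apply: (eP _).2; exists y.
Qed.

Lemma Fin2_below_restr_of_columns (X : Type) (I : set (set X)) (G : set X)
    (f : X -> nat * nat) :
  is_ideal I -> set_bij G [set: nat * nat] f ->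
  (forall a, I (G `&` [set n | (f n).1 = a])) ->
  (forall A, A `<=` G -> (forall a, finite_set (A `&` [set n | (f n).1 = a])) -> I A) ->
  Fin2_below_restr I G.
Proof.
move=> idealI [_ finj fsurj] Icolumn Ithin.
exists f; split=> // [p|B FinB]; first by have [n Gn <-] := fsurj p Logic.I; exists n.
exists (G `&` f @^-1` B); last by rewrite setIAC setIid.
have [M ltM] := finite_nat_bounded FinB.
apply: (@ideal_subU _ _ idealI (G `&` [set n | ((f n).1 < M)%N])
                                (G `&` f @^-1` B `&` [set n | (M <= (f n).1)%N])).
- by move=> n [Gn Bn]; case: (ltnP (f n).1 M); [left | right].
- apply: (ideal_sub idealI _ (ideal_bigcup_lt idealI M Icolumn)) => n [Gn /= ltnM].
  by exists (f n).1.
apply: Ithin => [n [[]]//|a].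
have [aM|Ma] := ltnP a M.
  apply: sub_finite_set (finite_set0 X) => n [[_ /= Mn] an].
  by move: aM; rewrite -an ltnNge Mn.
(* column [a] lies beyond every infinite section of [B], so [B] meets it finitely *)
have finBa : finite_set [set b | B (a, b)].
  by apply: contrapT => /ltM; rewrite /= ltnNge Ma.
apply: sub_finite_set (finite_preimage_in finj (finite_image (pair a) finBa)).
move=> n [[[Gn Bn] _] /= an]; split=> //.
by exists (f n).2; rewrite /= -an -surjective_pairing.
Qed.

Lemma exists_column_bijection (X : Type) (G : set X) (kf : X -> nat) :
  countable G -> infinite_set (kf @` G) ->
  (forall j, (kf @` G) j -> infinite_set (G `&` kf @^-1` [set j])) ->
  exists f : X -> nat * nat, set_bij G [set: nat * nat] f /\
    forall n m, G n -> G m -> (f n).1 = (f m).1 <-> kf n = kf m.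
Proof.
move=> countG infK infP.
have /card_set_bijP[jK [_ jKinj jKsurj]] : (kf @` G #= [set: nat])%card.
  exact: eq_card_nat (sub_countable (card_image_le kf G) countG) infK.
have [g gbij] : {g : nat -> X -> nat & forall j, (kf @` G) j ->
    set_bij (G `&` kf @^-1` [set j]) [set: nat] (g j)}.
  apply: (choice (P := fun j gj => (kf @` G) j ->
    set_bij (G `&` kf @^-1` [set j]) [set: nat] gj)) => j.
  have [Kj|nKj] := pselect ((kf @` G) j); last by exists (fun=> 0%N).
  have /card_set_bijP[gj ?] : (G `&` kf @^-1` [set j] #= [set: nat])%card.
    apply: eq_card_nat (infP j Kj).
    exact: sub_countable (subset_card_le (@subIsetl _ _ _)) countG.
  by exists gj.
pose f n := (jK (kf n), g (kf n) n).
have column n m : G n -> G m -> (f n).1 = (f m).1 <-> kf n = kf m.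
  move=> Gn Gm; split=> [|/= -> //].
  by apply: jKinj; rewrite inE; [exists n | exists m].
exists f; split=> //; split=> // [n m|[a b] _].
  rewrite !inE => Gn Gm [/(column n m Gn Gm).1 knm].
  have [_ ginj _] := gbij (kf n) (ex_intro2 _ _ n Gn erefl).
  by rewrite -knm; apply: ginj; rewrite inE.
have [j Kj <-] := jKsurj a Logic.I.
have [_ _ gsurj] := gbij j Kj.
have [n [Gn /= kn] <-] := gsurj b Logic.I.
by exists n => //; rewrite /f kn.
Qed.

Section thin_positive_subset.
Variables (X : Type) (I : set (set X)) (B : set X) (kf : X -> nat).
Hypotheses (countX : countable [set: X]) (idealI : is_ideal I).
Hypotheses (IB : ~ I B) (Ipiece : forall j, I (B `&` kf @^-1` [set j])).
(* the negation of the conclusion of [hereditary_weakP_thin_subset] below *)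
Hypothesis thin_in_ideal : forall A, A `<=` B ->
  (forall j, finite_set (A `&` kf @^-1` [set j])) -> I A.

Let piece j := B `&` kf @^-1` [set j].
Let Binf := B `&` [set n | infinite_set (piece (kf n))].

Lemma Binf_piece j : infinite_set (piece j) -> Binf `&` kf @^-1` [set j] = piece j.
Proof.
move=> infj; apply/seteqP; split=> [n [[]]//|n [Bn kn]].
by split=> //; split=> //=; rewrite kn.
Qed.

Lemma Binf_notin_ideal : ~ I Binf.
Proof.
move=> IBinf; apply: IB.
apply: (ideal_subU idealI _ _ IBinf (A := B `&` [set n | finite_set (piece (kf n))])).
  by move=> n Bn; have [|] := pselect (finite_set (piece (kf n))); [left | right].
apply: thin_in_ideal => [n []//|j].
have [finj|infj] := pselect (finite_set (piece j)).
  by apply: sub_finite_set finj => n [[Bn _] kn].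
by apply: sub_finite_set (finite_set0 X) => n [[_ /= finn] kn]; apply: infj; rewrite -kn.
Qed.

Lemma infinite_Binf_indices : infinite_set (kf @` Binf).
Proof.
move=> /finite_nat_bounded[N ltN]; apply: Binf_notin_ideal.
apply: (ideal_sub idealI _ (ideal_bigcup_lt idealI N Ipiece)) => n Binfn.
by exists (kf n); [apply: ltN; exists n | split=> //; case: Binfn].
Qed.

Lemma Fin2_below_Binf : Fin2_below_restr I Binf.
Proof.
have countBinf : countable Binf.
  exact: sub_countable (subset_card_le (@subsetT _ _)) countX.
have infpieces j : (kf @` Binf) j -> infinite_set (Binf `&` kf @^-1` [set j]).
  by move=> [n [_ infn] <-]; rewrite Binf_piece.
have [f [fbij column]] :=
  exists_column_bijection countBinf infinite_Binf_indices infpieces.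
apply: (Fin2_below_restr_of_columns idealI fbij) => [a|A ABinf Afin].
  have [_ _ fsurj] := fbij; have [n Binfn fn] := fsurj (a, 0%N) Logic.I.
  apply: (ideal_sub idealI _ (Ipiece (kf n))) => m [Binfm /= fm]; split; first by case: Binfm.
  by apply/(column m n Binfm Binfn); rewrite fm fn.
apply: thin_in_ideal => [n /ABinf[]//|j].
have [[n [An kn]]|none] := pselect (exists n, A n /\ kf n = j).
  apply: sub_finite_set (Afin (f n).1) => m [Am km]; split=> //=.
  by apply/(column m n (ABinf m Am) (ABinf n An)); rewrite km kn.
by apply: sub_finite_set (finite_set0 X) => m [Am km]; apply: none; exists m.
Qed.

End thin_positive_subset.

Lemma hereditary_weakP_thin_subset (X : Type) (I : set (set X)) (B : set X)
    (kf : X -> nat) :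
  countable [set: X] -> is_ideal I -> hereditary_weakP I -> ~ I B ->
  (forall j, I (B `&` kf @^-1` [set j])) ->
  exists2 A, A `<=` B & ~ I A /\ (forall j, finite_set (A `&` kf @^-1` [set j])).
Proof.
move=> countX idealI weakPI IB Ipiece; apply: contrapT => nothin.
have thin A : A `<=` B -> (forall j, finite_set (A `&` kf @^-1` [set j])) -> I A.
  by move=> AB Afin; apply: contrapT => IA; apply: nothin; exists A.
exact: weakPI _ (Binf_notin_ideal idealI IB thin)
  (Fin2_below_Binf countX idealI IB Ipiece thin).
Qed.

Section order_topology_sequences.
Context {d : Order.disp_t} {W : orderType d}.
Local Open Scope order_scope.

Lemma order_nbhs_left (l : W) (U : set (order_topology W)) :
  nbhs (l : order_topology W) U ->
  (forall y, y <= l -> U y) \/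
  exists2 a, a < l & forall y, a < y -> y <= l -> U y.
Proof.
rewrite order_nbhs_itv => -[[lb rb] [oe li] iU].
move: li; rewrite itv_boundlr => /andP[lbl lrb].
have Ul y : lb <= BLeft y -> y <= l -> U y.
  move=> lby yl; apply: iU; rewrite /= itv_boundlr lby /=.
  by apply: le_trans lrb; rewrite bnd_simp.
case: lb oe lbl Ul {iU} => [b a | b] oe lbl Ul.
- move: (itv_open_ends_lside oe) lbl Ul => -> lbl Ul; right.
  by exists a => [|y ay]; [move: lbl | apply: Ul]; rewrite bnd_simp.
- move: (itv_open_ends_linfty oe) Ul => -> Ul.
  by left => y; apply: Ul; rewrite bnd_simp.
Qed.

Lemma converges_on_from_below (X : Type) (A : set X) (x : X -> W) (l : W) :
  (forall n, A n -> x n <= l) ->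
  (forall a, a < l -> finite_set (A `&` [set n | x n <= a])) ->
  converges_on (T := order_topology W) A x l.
Proof.
move=> Axl Afin U /order_nbhs_left[Ul|[a al Ual]].
  by apply: sub_finite_set (finite_set0 X) => n [An nU]; apply/nU/Ul/Axl.
apply: sub_finite_set (Afin a al) => n [An nU]; split=> //=.
by rewrite leNgt; apply/negP => axn; apply/nU/Ual => //; exact: Axl.
Qed.

Section positive_subset_below.
Variables (X : Type) (I : set (set X)).
Hypotheses (countX : countable [set: X]) (idealI : is_ideal I).
Hypothesis weakPI : hereditary_weakP I.
Variables (x : X -> W) (l : W).
Hypothesis countable_below : countable [set y | y < l].
Hypothesis Ibelow : forall a, a < l -> I [set n | x n <= a].

Lemma positive_subset_strictly_below : ~ I [set n | x n < l] ->
  exists2 A, A `<=` [set n | x n < l] &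
    ~ I A /\ forall a, a < l -> finite_set (A `&` [set n | x n <= a]).
Proof.
set B := [set n | x n < l] => IB.
have [n0 Bn0] : B !=set0.
  apply: contrapT => none; apply: IB.
  apply: (ideal_sub idealI _ (ideal_finite idealI (finite_set0 X))) => n Bn.
  by apply: none; exists n.
have [e range_e] := countable_enum countable_below (ex_intro _ (x n0) Bn0).
have el k : e k < l.
  have : range e (e k) by exists k.
  by rewrite range_e.
have [kf kfP] : {kf : X -> nat & forall n, B n ->
    x n <= e (kf n) /\ forall j, x n <= e j -> (kf n <= j)%N}.
  apply: (choice (P := fun n k => B n ->
    x n <= e k /\ forall j, x n <= e j -> (k <= j)%N)) => n.
  have [Bn|nBn] := pselect (B n); last by exists 0%N.
  have [k _ ekx] : range e (x n) by rewrite range_e.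
  have xek : x n <= e k by rewrite ekx.
  have [m xm mmin] := find_ex_minn (ex_intro (fun k => x n <= e k) k xek).
  by exists m.
have Ipiece j : I (B `&` kf @^-1` [set j]).
  apply: (ideal_sub idealI _ (Ibelow (el j))) => n [Bn /= <-].
  exact: (kfP n Bn).1.
have [A AB [IA Afin]] := hereditary_weakP_thin_subset countX idealI weakPI IB Ipiece.
exists A => //; split=> // a al.
have [k _ ek] : range e a by rewrite range_e.
apply: sub_finite_set (bigcup_finite (finite_II k.+1) (fun j _ => Afin j)).
move=> n [An xn]; exists (kf n) => //=.
by rewrite ltnS; apply: (kfP n (AB n An)).2; rewrite ek.
Qed.

Lemma positive_subset_below : ~ I [set n | x n <= l] ->
  exists2 A, ~ I A &
    (forall n, A n -> x n <= l) /\
    forall a, a < l -> finite_set (A `&` [set n | x n <= a]).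
Proof.
move=> Il; have [Ieq|Ieq] := pselect (I [set n | x n = l]); last first.
  exists [set n | x n = l] => //; split=> [n /= -> //|a al].
  by apply: sub_finite_set (finite_set0 X) => n [/= -> la]; move: al; rewrite ltNge la.
have [|A Al [IA Afin]] := positive_subset_strictly_below.
  move=> Ilt; apply: Il; apply: (ideal_subU idealI _ Ilt Ieq) => n /=.
  by rewrite le_eqVlt => /orP[/eqP|]; [right | left].
by exists A => //; split=> // n /Al /ltW.
Qed.

End positive_subset_below.
End order_topology_sequences.

Section omega1.
Variables (d : Order.disp_t) (W : orderType d).
Hypothesis omega1W : is_omega1 W.
Local Open Scope order_scope.

Lemma omega1_bounded (X : Type) (x : X -> W) :
  countable [set: X] -> exists b, forall n, x n <= b.
Proof.
case: omega1W => _ Wunc Wseg countX; apply: contrapT => unbounded; apply: Wunc.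
have -> : [set: W] = \bigcup_(n in [set: X]) [set y | y < x n].
  apply/seteqP; split=> y // _; apply: contrapT => ybound; apply: unbounded.
  by exists y => n; rewrite leNgt; apply/negP => yx; apply: ybound; exists n.
by apply: bigcup_countable => // n _; exact: Wseg.
Qed.

Lemma omega1_no_max (y : W) : exists w, y < w.
Proof.
case: omega1W => _ Wunc Wseg; apply: contrapT => ymax; apply: Wunc.
have -> : [set: W] = [set z | z < y] `|` [set y].
  apply/seteqP; split=> z // _; have [zy|yz|->] := ltgtP z y; [by left | | by right].
  by exfalso; apply: ymax; exists z.
exact: countable_setU (Wseg y) (countable1 y).
Qed.

Lemma omega1_not_compact : ~ compact [set: order_topology W].
Proof.
have [w0 _] : [set: W] !=set0.
  by apply/set0P/eqP => W0; case: omega1W => _ + _; rewrite W0; apply.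
pose F := filter_from [set: W] (fun w => [set y : order_topology W | w <= y]).
have FF : ProperFilter F.
  apply: filter_from_proper => [|w _]; last by exists w => /=.
  apply: filter_fromT_filter; first by exists w0.
  move=> i j; exists (Order.max i j) => y /= h.
  by split; apply: le_trans h; rewrite le_max lexx ?orbT.
move=> /(_ F FF filterT) [l [_ Fl]].
have [w lw] := omega1_no_max l.
have Fw : F [set y | w <= y] by exists w.
have lw_nbhs : nbhs (l : order_topology W) [set y | y < w].
  by apply: open_nbhs_nbhs; split; [exact: lray_open | exact: lw].
have [y [/= wy yw]] := Fl _ _ Fw lw_nbhs.
by move: wy; rewrite leNgt yw.
Qed.

Lemma omega1_FinBW (X : Type) (I : set (set X)) :
  countable [set: X] -> is_ideal I -> hereditary_weakP I ->
  FinBW I (order_topology W).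
Proof.
move=> countX idealI weakPI; split=> [|x]; first exact: order_hausdorff.
have [b xb] := omega1_bounded x countX.
have [Wmin _ Wseg] := omega1W.
have Ib : ~ I [set n | x n <= b].
  by move=> /(@ideal_sub _ _ idealI _ setT (fun n _ => xb n)); case: idealI.
have [l Il lmin] := Wmin [set a | ~ I [set n | x n <= a]] (ex_intro _ b Ib).
have Ibelow a : a < l -> I [set n | x n <= a].
  by move=> al; apply: contrapT => /lmin; rewrite leNgt al.
have [A IA [Al Afin]] := positive_subset_below countX idealI weakPI (Wseg l) Ibelow Il.
by exists A => //; exists l; exact: converges_on_from_below.
Qed.

End omega1.

Lemma set_nat_uncountable : ~ countable [set: set nat].
Proof.
move=> /countable_injP[f finj].
pose D := [set n | exists2 A, f A = n & ~ A n].
have [Dn|nDn] := pselect (D (f D)); last by apply: (nDn); exists D.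
case: (Dn) => A fA nAn; apply: nAn.
by have -> : A = D by apply: finj; rewrite ?inE.
Qed.

Section well_order_facts.
Variables (T : eqType) (R : rel T).
Hypothesis woR : well_order R.

Let woR_chain : wo_chain R predT. Proof. by move=> A _; apply: woR. Qed.

Lemma well_order_refl : reflexive R.
Proof. by move=> x; apply: (wo_chain_reflexive woR_chain). Qed.

Lemma well_order_anti : antisymmetric R.
Proof. by move=> x y; apply: (wo_chain_antisymmetric woR_chain). Qed.

Lemma well_order_total : total R.
Proof. by move=> x y; apply: (wo_chainW woR_chain). Qed.

Lemma well_order_min (A : set T) : A !=set0 ->
  exists2 m, A m & forall y, A y -> R m y.
Proof.
move=> [a Aa]; have [|m [[Am mlb] _]] := @woR [pred t | `[< A t >]].
  by exists a; rewrite inE.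
exists m => [|y Ay]; first by move: Am; rewrite inE.
by apply: mlb; rewrite inE.
Qed.

Lemma well_order_trans : transitive R.
Proof.
move=> y x z xy yz.
have [m] := @well_order_min [set t | [\/ t = x, t = y | t = z]]
  (ex_intro _ x (Or31 _ _ erefl)).
case=> -> mmin.
- by apply: mmin; apply: Or33.
- have yx : R y x by apply: mmin; apply: Or31.
  by have -> : x = y by apply: well_order_anti; rewrite xy yx.
- have zy : R z y by apply: mmin; apply: Or32.
  by have <- : y = z by apply: well_order_anti; rewrite yz zy.
Qed.

End well_order_facts.

Definition wo_set_nat : rel (set nat) := sval (well_ordering_principle (set nat)).

Lemma wo_set_natP : well_order wo_set_nat.
Proof. exact: svalP (well_ordering_principle (set nat)). Qed.

Definition countable_segment (y : set nat) := countable [set z | wo_set_nat z y].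

(* omega1 is realised inside a well-order of the uncountable type [set nat] *)
Definition omega1 := {y : set nat | `[< countable_segment y >]}.
HB.instance Definition _ := Choice.on omega1.

Definition omega1_le (a b : omega1) := wo_set_nat (val a) (val b).

Lemma omega1_le_refl : reflexive omega1_le.
Proof. by move=> a; apply: (well_order_refl wo_set_natP). Qed.

Lemma omega1_le_anti : antisymmetric omega1_le.
Proof. by move=> a b /(well_order_anti wo_set_natP) ab; apply: val_inj. Qed.

Lemma omega1_le_trans : transitive omega1_le.
Proof. by move=> a b c; apply: (well_order_trans wo_set_natP). Qed.

Lemma omega1_le_total : total omega1_le.
Proof. by move=> a b; apply: (well_order_total wo_set_natP). Qed.

HB.instance Definition _ := Order.Le_isPOrder.Build (Order.Disp tt tt) omega1
  omega1_le_refl omega1_le_anti omega1_le_trans.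
HB.instance Definition _ := Order.POrder_isTotal.Build (Order.Disp tt tt) omega1
  omega1_le_total.

Lemma omega1_min (S : set omega1) : S !=set0 ->
  exists2 m, S m & forall y, S y -> (m <= y)%O.
Proof.
move=> [w0 Sw0].
have [|_ [m Sm <-] mmin] := well_order_min wo_set_natP (A := val @` S).
  by exists (val w0), w0.
by exists m => // y Sy; apply: mmin; exists y.
Qed.

Lemma omega1_uncountable : ~ countable [set: omega1].
Proof.
move=> countW.
have countP : countable [set t | countable_segment t].
  apply: sub_countable (sub_countable (card_image_le val [set: omega1]) countW).
  by apply: subset_card_le => t Pt; exists (exist _ t (asboolT Pt)).
(* the least point with an uncountable segment has only countable-segment predecessors *)
have [|m nPm mmin] := well_order_min wo_set_natP (A := [set t | ~ countable_segment t]).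
  apply: contrapT => none; apply: set_nat_uncountable.
  apply: sub_countable countP; apply: subset_card_le => t _.
  by apply: contrapT => nPt; apply: none; exists t.
apply: nPm; apply: sub_countable (countable_setU countP (countable1 m)).
apply: subset_card_le => z zm; have [|nPz] := pselect (countable_segment z); first by left.
by right; apply: (well_order_anti wo_set_natP); rewrite zm mmin.
Qed.

Lemma omega1_segment_countable (w : omega1) : countable [set y | (y < w)%O].
Proof.
have /countable_injP[c cinj] : countable_segment (val w).
  by move: (valP w) => /asboolP.
apply/countable_injP; exists (c \o val) => a b; rewrite !inE => aw bw cab.
by apply: val_inj; apply: cinj; rewrite ?inE //; [exact: ltW aw | exact: ltW bw].
Qed.

Lemma omega1_is_omega1 : is_omega1 omega1.
Proof.
by split; [exact: omega1_min | exact: omega1_uncountable | exact: omega1_segment_countable].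
Qed.

Unset Implicit Arguments.

Theorem proposition6p1 (X : Type) (I : set (set X)) :
  countable [set: X] -> infinite_set [set: X] ->
  is_ideal I -> hereditary_weakP I ->
  (forall (d : Order.disp_t) (W : orderType d), is_omega1 W ->
     FinBW I (order_topology W)) /\
  (exists T : topologicalType, ~ compact [set: T] /\ FinBW I T).
Proof.
(* the infinitude of [X] is already forced by [is_ideal I] *)
move=> countX _ idealI weakPI.
split=> [d W omega1W|]; first exact: omega1_FinBW.
exists (order_topology omega1); split; first exact: omega1_not_compact omega1_is_omega1.
exact: (omega1_FinBW omega1_is_omega1 countX idealI weakPI).
Qed.
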